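(* Let $s,t\in\mathbb{R}$ with $s\ne0$, $s^2+4t>0$, and $q=\varphi'_{s,t}/\varphi_{s,t}\ne1$. Let $p$ be a $q$-periodic function, i.e. $p(qy)=p(y)$ for all $y$ in its domain (in the paper $p(x)=G(\log_q(x))$ with $G$ periodic of period one). Let $0\le a<b$ and let $f$ be $(s,t)$-integrable on $[0,r]$ for $r\in\{a,b\}$ and continuous at $0$. Then $$\int_a^b p(x)f(x)\,d_{s,t}x=p\!\left(\frac{b}{\varphi_{s,t}}\right)\int_0^b f(x)\,d_{s,t}x-p\!\left(\frac{a}{\varphi_{s,t}}\right)\int_0^a f(x)\,d_{s,t}x,$$ where for $a=0$ the second term is interpreted as $0$.
   Context: $\varphi_{s,t}=\frac{s+\sqrt{s^2+4t}}{2}$, $\varphi'_{s,t}=\frac{s-\sqrt{s^2+4t}}{2}$. If $0<\lvert q\rvert<1$, $\int_a^b f(x)\,d_{s,t}x=(1-q)\sum_{n=0}^\infty\big[bf(bq^n/\varphi_{s,t})-af(aq^n/\varphi_{s,t})\big]q^n$; if $\lvert q\rvert>1$, $\int_a^b f(x)\,d_{s,t}x=(1-q)\sum_{n=0}^\infty\big[bf(bq^{-n}/\varphi'_{s,t})-af(aq^{-n}/\varphi'_{s,t})\big]q^{-n}$. In particular $\int_0^r f\,d_{s,t}x$ is the corresponding series with only the $r$-terms. ''$(s,t)$-integrable on $[0,r]$'' means this series converges. *)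

From Stdlib Require Import Reals.
From Coquelicot Require Import Coquelicot.
Open Scope R_scope.

Definition phi (s t : R) : R := (s + sqrt (s ^ 2 + 4 * t)) / 2.
Definition phi' (s t : R) : R := (s - sqrt (s ^ 2 + 4 * t)) / 2.
Definition qst (s t : R) : R := phi' s t / phi s t.

Definition st_integral (s t : R) (f : R -> R) (a b : R) : R :=
  let q := qst s t in
  if Rlt_dec (Rabs q) 1 then
    (1 - q) * Series (fun n => (b * f (b * q ^ n / phi s t)
                                - a * f (a * q ^ n / phi s t)) * q ^ n)
  else
    (1 - q) * Series (fun n => (b * f (b * (/ q) ^ n / phi' s t)
                                - a * f (a * (/ q) ^ n / phi' s t)) * (/ q) ^ n).

Definition st_integral0 (s t : R) (f : R -> R) (r : R) : R :=
  let q := qst s t in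
  if Rlt_dec (Rabs q) 1 then
    (1 - q) * Series (fun n => r * f (r * q ^ n / phi s t) * q ^ n)
  else
    (1 - q) * Series (fun n => r * f (r * (/ q) ^ n / phi' s t) * (/ q) ^ n).

Definition st_integrable0 (s t : R) (f : R -> R) (r : R) : Prop :=
  let q := qst s t in
  if Rlt_dec (Rabs q) 1 then
    ex_series (fun n => r * f (r * q ^ n / phi s t) * q ^ n)
  else
    ex_series (fun n => r * f (r * (/ q) ^ n / phi' s t) * (/ q) ^ n).

(** Every node [r q^n / phi] (for [|q| < 1]) or [r q^-n / phi' = r q^-(n+1) / phi]
    (for [|q| > 1]) of the Jackson series of [int_0^r] lies in the [q]-orbit of
    [r / phi], so a [q]-periodic [p] is constant, equal to [p (r / phi)], along it
    and factors out of the series. *)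

From Stdlib Require Import Reals.
From Coquelicot Require Import Coquelicot.
Open Scope R_scope.

Definition st_node (s t r : R) (n : nat) : R :=
  let q := qst s t in
  if Rlt_dec (Rabs q) 1 then r * q ^ n / phi s t else r * (/ q) ^ n / phi' s t.

Definition st_weight (s t : R) (n : nat) : R :=
  let q := qst s t in
  if Rlt_dec (Rabs q) 1 then q ^ n else (/ q) ^ n.

Section JacksonSeries.

Variables (s t : R).

Lemma st_integral0E (f : R -> R) (r : R) :
  st_integral0 s t f r
  = (1 - qst s t) * Series (fun n => r * f (st_node s t r n) * st_weight s t n).
Proof.
  unfold st_integral0, st_node, st_weight; cbv zeta.
  destruct (Rlt_dec (Rabs (qst s t)) 1); reflexivity.
Qed.

Lemma st_integrable0E (f : R -> R) (r : R) :
  st_integrable0 s t f r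
  <-> ex_series (fun n => r * f (st_node s t r n) * st_weight s t n).
Proof.
  unfold st_integrable0, st_node, st_weight; cbv zeta.
  destruct (Rlt_dec (Rabs (qst s t)) 1); reflexivity.
Qed.

Lemma st_integralE (f : R -> R) (a b : R) :
  st_integral s t f a b
  = (1 - qst s t) * Series (fun n =>
      (b * f (st_node s t b n) - a * f (st_node s t a n)) * st_weight s t n).
Proof.
  unfold st_integral, st_node, st_weight; cbv zeta.
  destruct (Rlt_dec (Rabs (qst s t)) 1); reflexivity.
Qed.

Lemma st_integral_split (f : R -> R) (a b : R) :
  st_integrable0 s t f a -> st_integrable0 s t f b ->
  st_integral s t f a b = st_integral0 s t f b - st_integral0 s t f a.
Proof.
  rewrite !st_integrable0E; intros ia ib.
  rewrite st_integralE, !st_integral0E.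
  rewrite (Series_ext _ (fun n =>
    b * f (st_node s t b n) * st_weight s t n
    - a * f (st_node s t a n) * st_weight s t n)) by (intro n; ring).
  rewrite Series_minus by assumption.
  ring.
Qed.

Section Periodic.

Variable p : R -> R.
Hypothesis q_neq0 : qst s t <> 0.
Hypothesis p_periodic : forall y, p (qst s t * y) = p y.

(* [qst] divides by [phi], and [/ 0 = 0] would make [qst] vanish. *)
Lemma phi_neq0 : phi s t <> 0.
Proof.
  intro phi0; apply q_neq0.
  unfold qst, Rdiv; rewrite phi0, Rinv_0; ring.
Qed.

Lemma phi'_eq : phi' s t = qst s t * phi s t.
Proof. unfold qst; field; exact phi_neq0. Qed.

Lemma periodic_pow (n : nat) (y : R) : p (qst s t ^ n * y) = p y.
Proof.
  induction n as [|n IH]; simpl.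
  - now rewrite Rmult_1_l.
  - now rewrite Rmult_assoc, p_periodic.
Qed.

Lemma periodic_pow_inv (n : nat) (y : R) : p ((/ qst s t) ^ n * y) = p y.
Proof.
  rewrite <- (periodic_pow n).
  f_equal.
  rewrite <- Rmult_assoc, <- Rpow_mult_distr, Rinv_r, pow1 by exact q_neq0.
  ring.
Qed.

Lemma periodic_st_node (r : R) (n : nat) : p (st_node s t r n) = p (r / phi s t).
Proof.
  unfold st_node; cbv zeta.
  destruct (Rlt_dec (Rabs (qst s t)) 1).
  - rewrite <- (periodic_pow n (r / phi s t)).
    f_equal; unfold Rdiv; ring.
  - rewrite <- (periodic_pow_inv (S n) (r / phi s t)).
    f_equal; rewrite phi'_eq; simpl.
    field; split; [exact phi_neq0 | exact q_neq0].
Qed.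

Lemma st_integrand_periodic (f : R -> R) (r : R) (n : nat) :
  r * (p (st_node s t r n) * f (st_node s t r n)) * st_weight s t n
  = p (r / phi s t) * (r * f (st_node s t r n) * st_weight s t n).
Proof. rewrite periodic_st_node; ring. Qed.

Lemma st_integral0_periodic (f : R -> R) (r : R) :
  st_integral0 s t (fun x => p x * f x) r = p (r / phi s t) * st_integral0 s t f r.
Proof.
  rewrite !st_integral0E.
  rewrite (Series_ext _ _ (st_integrand_periodic f r)), Series_scal_l.
  ring.
Qed.

Lemma st_integrable0_periodic (f : R -> R) (r : R) :
  st_integrable0 s t f r -> st_integrable0 s t (fun x => p x * f x) r.
Proof.
  rewrite !st_integrable0E; intro i.
  apply (ex_series_ext _ _ (fun n => eq_sym (st_integrand_periodic f r n))).
  exact (ex_series_scal_l _ _ i).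
Qed.

End Periodic.

End JacksonSeries.

Theorem mainTheorem5 (s t : R) (p f : R -> R) (a b : R)
  (hs : s <> 0) (hd : s ^ 2 + 4 * t > 0)
  (hq1 : qst s t <> 1) (hq0 : qst s t <> 0)
  (hp : forall y : R, p (qst s t * y) = p y)
  (ha : 0 <= a) (hab : a < b)
  (hia : st_integrable0 s t f a) (hib : st_integrable0 s t f b)
  (hc : continuous f 0) :
  st_integral s t (fun x => p x * f x) a b =
    p (b / phi s t) * st_integral0 s t f b
    - p (a / phi s t) * st_integral0 s t f a.
Proof.
  (* The identity holds term by term in the defining series, so only [hq0], [hp]
     and the integrability hypotheses are needed. *)
  rewrite st_integral_split
    by (apply st_integrable0_periodic; assumption).
  now rewrite !st_integral0_periodic.
Qed.
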